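(* Let $Y$ be a discrete random variable taking values in a set $\mathcal{Y}$, and let $B=(B_0,\dots,B_{m-1})$ be a binary random vector taking values in $\{0,1\}^m$, defined on the same probability space. Suppose that $\mathbf{H}(Y\mid B)=0$ and that the components of $B$ are independent conditionally on $Y$, i.e. $P(B=b\mid Y=y)=\prod_{i=0}^{m-1}P(B_i=b_i\mid Y=y)$ for all $b\in\{0,1\}^m$ and all $y$ with $P(Y=y)>0$. Then for every class $y_n\in\mathcal{Y}$ with $P(Y=y_n)>0$ there exists a vector $\mu^{(n)}\in\mathbb{R}^{m+1}$ such that for every $b\in\{0,1\}^m$ with $P(B=b)\neq 0$, \[ (b_0,\dots,b_{m-1},1)\cdot\mu^{(n)}>0 \iff P(Y=y_n\mid B=b)=1 . \]
   Context: $\mathbf{H}(Y\mid B)$ denotes the conditional Shannon entropy of $Y$ given $B$; the condition $\mathbf{H}(Y\mid B)=0$ means $Y$ is almost surely a function of $B$. The dot denotes the standard inner product on $\mathbb{R}^{m+1}$. *)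

From HB Require Import structures.
From mathcomp Require Import all_boot all_order all_algebra.
From mathcomp Require Import all_classical all_reals all_analysis.
Set Implicit Arguments. Unset Strict Implicit. Unset Printing Implicit Defensive.
Import Order.TTheory GRing.Theory Num.Theory.
Local Open Scope classical_set_scope.
Local Open Scope ring_scope.

Section Defs.
Context {d : measure_display} {Omega : measurableType d} {R : realType}.
Variable P : probability Omega R.

Definition Pr (A : set Omega) : R := fine (P A).

Definition cPr (A C : set Omega) : R := Pr (A `&` C) / Pr C.

Definition ev {T : Type} (X : Omega -> T) (x : T) : set Omega := X @^-1` [set x].

Definition discrete_rv {T : Type} (X : Omega -> T) : Prop :=
  forall x, measurable (ev X x).

(* -q ln q, with the convention 0 ln 0 = 0 (ln 0 = 0 in mathcomp-analysis) *)
Definition entr_term (q : R) : R := - (q * ln q).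

Definition cond_entropy {T : choiceType} {U : finType} (Y : Omega -> T) (B : Omega -> U)
  : \bar R :=
  (\sum_(b : U) (Pr (ev B b))%:E *
     \esum_(y in [set: T]) (entr_term (cPr (ev Y y) (ev B b)))%:E)%E.

End Defs.

Definition dotR {R : realType} {n : nat} (x y : 'I_n -> R) : R :=
  \sum_(i < n) x i * y i.

(* the augmented vector (b_0, ..., b_{m-1}, 1) *)
Definition augment {R : realType} {m : nat} (b : {ffun 'I_m -> bool}) : 'I_m.+1 -> R :=
  fun i => match unlift ord_max i with
           | Some j => (b j)%:R
           | None => 1
           end.

(** If [H(Y | B) = 0], every cell [{B = b}] of positive probability lies,
    up to a null set, inside a single class, so [P(Y = yn | B = b) = 1] as
    soon as it is nonzero, i.e. as soon as [P(B = b | Y = yn)] is nonzero.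
    By conditional independence the latter is the product of the
    [P(B_i = b_i | Y = yn)], so it is nonzero iff each coordinate [b_i] avoids
    the (at most one) value of probability zero given [Y = yn].  Such a
    conjunction of literals is a linear threshold function of [b]: give weight
    [-1] to each forbidden literal and threshold at [1/2]. *)

From HB Require Import structures.
From mathcomp Require Import all_boot all_order all_algebra.
From mathcomp Require Import all_classical all_reals all_analysis.
Import Order.TTheory GRing.Theory Num.Theory.
Local Open Scope classical_set_scope.
Local Open Scope ring_scope.

Lemma entr_term_ge0 {R : realType} (q : R) : 0 <= q <= 1 -> 0 <= entr_term q.
Proof.
by case/andP=> q_ge0 q_le1; rewrite /entr_term oppr_ge0 mulr_ge0_le0 ?ln_le0.
Qed.

Lemma entr_term_eq0 {R : realType} (q : R) : 0 < q -> entr_term q = 0 -> q = 1.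
Proof.
move=> q_gt0 /eqP; rewrite /entr_term oppr_eq0 mulf_eq0 gt_eqF //= ln_eq0 //.
by move/eqP.
Qed.

Section ConditionalProbability.
Context {d : measure_display} {Omega : measurableType d} {R : realType}.
Variable P : probability Omega R.

Lemma Pr_ge0 (A : set Omega) : 0 <= Pr P A.
Proof. exact: fine_ge0. Qed.

Lemma le_Pr (A C : set Omega) : measurable A -> measurable C -> A `<=` C ->
  Pr P A <= Pr P C.
Proof.
move=> mA mC AC; apply: fine_le; rewrite ?fin_num_measure //.
by apply: le_measure; rewrite ?inE.
Qed.

Lemma cPr_ge0 (A C : set Omega) : 0 <= cPr P A C.
Proof. by rewrite divr_ge0 ?Pr_ge0. Qed.

Lemma cPr_le1 (A C : set Omega) : measurable A -> measurable C -> cPr P A C <= 1.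
Proof.
move=> mA mC; rewrite /cPr; have [->|C_neq0] := eqVneq (Pr P C) 0; first by rewrite invr0 mulr0.
have C_gt0 : 0 < Pr P C by rewrite lt_def C_neq0 Pr_ge0.
by rewrite ler_pdivrMr // mul1r le_Pr //; exact: measurableI.
Qed.

Lemma cPr_eq0 (A C : set Omega) : Pr P C != 0 ->
  (cPr P A C == 0) = (Pr P (A `&` C) == 0).
Proof. by move=> C_neq0; rewrite /cPr mulf_eq0 invr_eq0 (negbTE C_neq0) orbF. Qed.

Lemma cPr_eq0C (A C : set Omega) : Pr P A != 0 -> Pr P C != 0 ->
  (cPr P A C == 0) = (cPr P C A == 0).
Proof. by move=> A_neq0 C_neq0; rewrite !cPr_eq0 // setIC. Qed.

(* Every summand of [H(Y | B)] is nonnegative, so each one vanishes, and in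
   particular so does the single entropy term of the class [y]. *)
Lemma cond_entropy_eq0_cPr {T : choiceType} {U : finType}
    (Y : Omega -> T) (B : Omega -> U) (b : U) (y : T) :
  discrete_rv Y -> discrete_rv B -> cond_entropy P Y B = 0%E ->
  Pr P (ev B b) != 0 -> cPr P (ev Y y) (ev B b) != 0 ->
  cPr P (ev Y y) (ev B b) = 1.
Proof.
move=> mY mB H0 b_neq0 q_neq0.
have entr_ge0 b' y' : 0 <= entr_term (cPr P (ev Y y') (ev B b')).
  by rewrite entr_term_ge0 // cPr_ge0 cPr_le1.
have summand_ge0 (b' : U) : true -> (0 <= (Pr P (ev B b'))%:E *
    \esum_(y' in [set: T]) (entr_term (cPr P (ev Y y') (ev B b')))%:E)%E.
  move=> _; apply: mule_ge0; first by rewrite lee_fin Pr_ge0.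
  by apply: esum_ge0 => y' _; rewrite lee_fin.
move/eqP: H0; rewrite /cond_entropy (seq_psume_eq0 _ summand_ge0).
move=> /allP /(_ b (mem_index_enum _)) /=.
rewrite mule_eq0 eqe (negbTE b_neq0) /= => /eqP esum_eq0.
have term_le_esum : ((entr_term (cPr P (ev Y y) (ev B b)))%:E <=
    \esum_(y' in [set: T]) (entr_term (cPr P (ev Y y') (ev B b)))%:E)%E.
  apply: esum_ge; exists [set y]; first by split; [exact: finite_set1|].
  by rewrite fsbig_set1.
rewrite esum_eq0 lee_fin in term_le_esum.
apply: entr_term_eq0; first by rewrite lt_def q_neq0 cPr_ge0.
by apply/eqP; rewrite eq_le term_le_esum entr_ge0.
Qed.

End ConditionalProbability.

Section LinearThreshold.
Context {R : realType} {m : nat}.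

Definition affine_of_weights (w : 'I_m -> bool -> R) (c : R) : 'I_m.+1 -> R :=
  fun j => match unlift ord_max j with
           | Some i => w i true - w i false
           | None => c + \sum_(i < m) w i false
           end.

Lemma dotR_augment_affine_of_weights (w : 'I_m -> bool -> R) (c : R)
    (b : {ffun 'I_m -> bool}) :
  dotR (augment b) (affine_of_weights w c) = c + \sum_(i < m) w i (b i).
Proof.
rewrite /dotR big_ord_recr /= /augment /affine_of_weights unlift_none mul1r.
have widen_lift (i : 'I_m) : widen_ord (leqnSn m) i = lift ord_max i.
  by apply/val_inj; rewrite /= /bump leqNgt ltn_ord.
under eq_bigr => i _ do rewrite widen_lift liftK.
rewrite addrC -addrA -big_split /=; congr (_ + _); apply: eq_bigr => i _.
by case: (b i); rewrite ?mul1r ?mul0r ?addr0 // addrC subrK.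
Qed.

Lemma half_sub_nat_gt0 (n : nat) : (0 < 2^-1 - n%:R :> R) = (n == 0)%N.
Proof.
case: n => [|n]; first by rewrite subr0 invr_gt0 ltr0n.
by rewrite subr_gt0 ltNge /= (@le_trans _ _ 1) // ?invf_le1 ?ler1n.
Qed.

Lemma conj_literals_separable (ok : 'I_m -> bool -> bool) :
  exists mu : 'I_m.+1 -> R, forall b : {ffun 'I_m -> bool},
    (0 < dotR (augment b) mu) = [forall i, ok i (b i)].
Proof.
exists (affine_of_weights (fun i c => - (~~ ok i c)%:R) 2^-1) => b.
rewrite dotR_augment_affine_of_weights sumrN -natr_sum half_sub_nat_gt0.
by rewrite sum_nat_eq0; apply: eq_forallb => i; rewrite eqb0 negbK.
Qed.

End LinearThreshold.

Theorem theorem1 (d : measure_display) (Omega : measurableType d) (R : realType)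
  (P : probability Omega R) (T : countType) (m : nat)
  (Y : Omega -> T) (B : Omega -> {ffun 'I_m -> bool})
  (hY : discrete_rv Y) (hB : discrete_rv B)
  (hH : cond_entropy P Y B = 0%E)
  (hind : forall (b : {ffun 'I_m -> bool}) (y : T), Pr P (ev Y y) > 0 ->
     cPr P (ev B b) (ev Y y) =
     \prod_(i < m) cPr P (ev (fun w => B w i) (b i)) (ev Y y)) :
  forall yn : T, Pr P (ev Y yn) > 0 ->
  exists mu : 'I_m.+1 -> R,
    forall b : {ffun 'I_m -> bool}, Pr P (ev B b) != 0 ->
      (0 < dotR (augment b) mu <-> cPr P (ev Y yn) (ev B b) = 1).
Proof.
move=> yn yn_gt0.
pose ok i c := cPr P (ev (fun w => B w i) c) (ev Y yn) != 0.
have [mu separates] := conj_literals_separable (R := R) ok.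
exists mu => b b_neq0; rewrite separates.
have cell_hit : [forall i, ok i (b i)] = (cPr P (ev Y yn) (ev B b) != 0).
  rewrite cPr_eq0C ?(gt_eqF yn_gt0) // hind //.
  by apply/forallP/prodf_neq0 => [all_ok i _|all_ok i]; exact: all_ok.
rewrite cell_hit; split=> [|->]; last by rewrite oner_eq0.
exact: cond_entropy_eq0_cPr.
Qed.
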